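(* Let $m$ be odd and let $f:\mathbb{Z}_m\to\{\pm1,\pm\mathrm{i}\}$ be an OQS. Then $R_f(w)\in\{1,-1\}$ (in particular $R_f(w)$ is real) for all $1\le w\le m-1$.
   Context: $\mathrm{i}=\sqrt{-1}$. For $f:\mathbb{Z}_m\to\mathbb{C}$, $R_f(w)=\sum_{k\in\mathbb{Z}_m}f(k)\overline{f(k+w)}$. A quaternary sequence $f:\mathbb{Z}_m\to\{\pm1,\pm\mathrm{i}\}$ of odd length $m$ is an OQS if $|R_f(w)|=1$ for all $1\le w\le m-1$. *)

(* complex numbers modelled by algC (algebraic complex numbers),
   which contains 'i and all values of interest. *)
From HB Require Import structures.
From mathcomp Require Import all_boot all_order all_algebra all_field.
Set Implicit Arguments. Unset Strict Implicit. Unset Printing Implicit Defensive.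
Import Order.TTheory GRing.Theory Num.Theory.
Local Open Scope ring_scope.

(* Z_m is represented by 'I_m with addition modulo m. *)
Lemma ord_pos (m : nat) (k : 'I_m) : (0 < m)%N.
Proof. exact: leq_ltn_trans (leq0n k) (ltn_ord k). Qed.

Definition zadd (m : nat) (k : 'I_m) (w : nat) : 'I_m :=
  Ordinal (ltn_pmod (k + w)%N (ord_pos k)).

Definition autocorr (m : nat) (f : 'I_m -> algC) (w : nat) : algC :=
  \sum_(k < m) f k * (f (zadd k w))^*.

Definition quaternary (m : nat) (f : 'I_m -> algC) : Prop :=
  forall k, f k \in [:: 1; -1; 'i; - 'i].

Definition OQS (m : nat) (f : 'I_m -> algC) : Prop :=
  [/\ odd m, quaternary f &
      forall w : nat, (1 <= w <= m.-1)%N -> `|autocorr f w| = 1].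

(** The values of a quaternary sequence are powers of [i], so R_f(w) is a sum
    of powers [i ^+ (e_k + 3 e_(k+w))] and hence a Gaussian integer [A + i B].
    The imaginary part of [i ^+ n] is congruent to [n] modulo 2, and the
    exponents add up to [4 * \sum_k e_k], so [B] is even.  Then [|R_f(w)| = 1]
    means [A ^ 2 + B ^ 2 = 1] with [B] even, which forces [B = 0] and
    [A = 1] or [A = -1]. *)
From HB Require Import structures.
From mathcomp Require Import all_boot all_order all_algebra all_field.
From mathcomp Require Import zify.
Set Implicit Arguments.
Unset Strict Implicit.
Unset Printing Implicit Defensive.

Import Order.TTheory GRing.Theory Num.Theory.
Local Open Scope ring_scope.

Definition iexp_re (n : nat) : int := if odd n then 0 else (-1) ^+ n./2.
Definition iexp_im (n : nat) : int := if odd n then (-1) ^+ n./2 else 0.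

Section PowersOfI.

Variable C : numClosedFieldType.

Lemma iexpE (n : nat) :
  'i ^+ n = (iexp_re n)%:~R + 'i * (iexp_im n)%:~R :> C.
Proof.
rewrite -[in LHS](odd_double_half n) exprD -mul2n exprM sqrCi /iexp_re /iexp_im.
have signE : ((-1) ^+ n./2 : int)%:~R = (-1) ^+ n./2 :> C.
  by rewrite rmorphXn /= rmorphN1.
by case: (odd n); rewrite ?expr1 ?expr0 signE ?mulr0 ?addr0 ?add0r ?mul1r // mulrC.
Qed.

Lemma conjC_iexp (n : nat) : ('i ^+ n)^* = 'i ^+ (3 * n) :> C.
Proof. by rewrite rmorphXn /= conjCi exprM exprS sqrCi mulrN1. Qed.

End PowersOfI.

Lemma iexp_im_mod2 (n : nat) : (2 %| iexp_im n - n%:Z)%Z.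
Proof.
have := odd_double_half n; rewrite /iexp_im -signr_odd.
by case: (odd n) => h; case: (odd n./2); rewrite ?expr1 ?expr0 /=; lia.
Qed.

Lemma zadd_inj (m w : nat) : injective (fun k : 'I_m => zadd k w).
Proof.
move=> k k' /(congr1 val) /= /eqP.
by rewrite eqn_modDr !modn_small // => /eqP /val_inj.
Qed.

Lemma quaternary_iexp (m : nat) (f : 'I_m -> algC) :
  quaternary f -> exists e : 'I_m -> nat, forall k, f k = 'i ^+ e k.
Proof.
move=> qf; apply: (fin_all_exists (P := fun k n => f k = 'i ^+ n)) => k.
move: (qf k); rewrite !inE => /or4P [] /eqP ->.
- by exists 0%N.
- by exists 2%N; rewrite sqrCi.
- by exists 1%N; rewrite expr1.
- by exists 3%N; rewrite exprS sqrCi mulrN1.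
Qed.

Lemma autocorr_iexp_gaussian (m : nat) (e : 'I_m -> nat) (w : nat) :
  exists A B : int,
    autocorr (fun k => 'i ^+ e k) w = A%:~R + 'i * B%:~R /\ (2 %| B)%Z.
Proof.
pose n k := (e k + 3 * e (zadd k w))%N.
exists (\sum_k iexp_re (n k)), (\sum_k iexp_im (n k)); split.
  rewrite /autocorr !rmorph_sum mulr_sumr -big_split /=.
  by apply: eq_bigr => k _; rewrite conjC_iexp -exprD iexpE.
have sum_n : (\sum_k n k = 4 * \sum_k e k)%N.
  rewrite big_split /= -big_distrr /=.
  rewrite -(reindex_inj (@zadd_inj m w) (P := xpredT) (F := e)) /=; lia.
have -> : \sum_k iexp_im (n k) =
    \sum_k (iexp_im (n k) - (n k)%:Z) + (4 * \sum_k e k)%N%:Z.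
  by rewrite sumrB -sum_n -(big_morph _ PoszD (erefl 0%Z)) subrK.
by apply: rpredD; [apply: rpred_sum => k _; apply: iexp_im_mod2 | rewrite dvdzE /= dvdn_mulr].
Qed.

Lemma gaussian_unit_even_im (A B : int) :
  `|A%:~R + 'i * B%:~R : algC| = 1 -> (2 %| B)%Z -> B = 0 /\ (A = 1 \/ A = -1).
Proof.
move=> norm1 evenB.
have sqr_sum : A ^+ 2 + B ^+ 2 = 1.
  apply: (@intr_inj algC); rewrite rmorphD /= !rmorphXn /= rmorph1.
  by rewrite -normC2_rect ?realz // norm1 expr1n.
move: evenB sqr_sum => /dvdzP [c ->]; rewrite !expr2 => sqr_sum; split; nia.
Qed.

Theorem corollary2 (m : nat) (f : 'I_m -> algC) :
  odd m -> OQS f ->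
  forall w : nat, (1 <= w <= m.-1)%N ->
    autocorr f w = 1 \/ autocorr f w = -1.
Proof.
move=> _ [_ qf autocorr_norm1] w w_range.
have [e fE] := quaternary_iexp qf.
have [A [B [RE evenB]]] := autocorr_iexp_gaussian e w.
have {}RE : autocorr f w = A%:~R + 'i * B%:~R.
  by rewrite -RE; apply: eq_bigr => k _; rewrite !fE.
have [B0 A_sign] : B = 0 /\ (A = 1 \/ A = -1).
  by apply: gaussian_unit_even_im evenB; rewrite -RE autocorr_norm1.
rewrite RE B0 mulr0 addr0.
by case: A_sign => ->; [left | right; rewrite rmorphN1].
Qed.
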